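(* Let $V$ be a finite-dimensional vector space over a field of characteristic different from $2$ and $b$ a non-degenerate symmetric or alternating bilinear form on $V$. Let $\mathcal{V}$ be a linear subspace of $\mathcal{A}_b$ all of whose elements are nilpotent. Let $x\in V\setminus\{0\}$, $u\in\mathcal{V}$ and $y\in V$ be such that $x\wedge_b y\in\mathcal{V}$. Then $b(u(x),y)=0$.
   Context: An endomorphism $u$ is $b$-alternating if $(x,y)\mapsto b(x,u(y))$ is alternating (vanishes on all $(x,x)$); $\mathcal{A}_b$ is the space of these. For $x,y\in V$, $x\wedge_b y$ is the endomorphism $z\mapsto b(y,z)\,x-b(x,z)\,y$. *)

From HB Require Import structures.
From mathcomp Require Import all_boot all_order all_algebra.
Set Implicit Arguments. Unset Strict Implicit. Unset Printing Implicit Defensive.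
Import GRing.Theory.
Local Open Scope ring_scope.

Section Defs.
Variables (F : fieldType) (V : vectType F).

Definition bform_bilinear (b : V -> V -> F) : Prop :=
  (forall (a : F) (x x' y : V), b (a *: x + x') y = a * b x y + b x' y) /\
  (forall (a : F) (x y y' : V), b x (a *: y + y') = a * b x y + b x y').

Definition bform_symmetric (b : V -> V -> F) : Prop := forall x y, b x y = b y x.

Definition bform_alternating (b : V -> V -> F) : Prop := forall x, b x x = 0.

Definition bform_nondegenerate (b : V -> V -> F) : Prop :=
  forall x, (forall y, b x y = 0) -> x = 0.

(* u is b-alternating: (x,y) |-> b(x, u y) is alternating *)
Definition b_alternating (b : V -> V -> F) (u : 'End(V)) : Prop :=
  forall x, b x (u x) = 0.

Definition nilpotent_end (u : 'End(V)) : Prop :=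
  exists k : nat, forall z, iter k u z = 0.

(* x /\_b y : z |-> b(y,z) x - b(x,z) y  (linear when b is bilinear) *)
Definition wedge_b (b : V -> V -> F) (x y : V) : 'End(V) :=
  linfun (fun z => b y z *: x - b x z *: y).

End Defs.

(* The trace form (f, g) |-> tr (f g) vanishes on a space of nilpotent
   endomorphisms, since tr (f^2) = 0 for nilpotent f and char F <> 2 allows
   polarization.  For the rank-two map x /\_b y one computes
   tr ((x /\_b y) u) = b(y, u x) - b(x, u y), which is 2 b(y, u x) because u is
   b-alternating; hence b(y, u x) = 0, and b(u x, y) = 0 since b is symmetric or
   alternating. *)

From HB Require Import structures.
From mathcomp Require Import all_boot all_order all_algebra.
Set Implicit Arguments. Unset Strict Implicit. Unset Printing Implicit Defensive.
Import GRing.Theory.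
Local Open Scope ring_scope.

Lemma char_poly_nilpotent (F : fieldType) n (A : 'M[F]_n) k :
  A ^+ k = 0 -> char_poly A = 'X^n.
Proof.
move=> Ak0.
(* det ('X^k - A^k) = 'X^(kn) is a multiple of char_poly A. *)
have XA : GRing.comm ('X%:M : 'M[{poly F}]_n) (map_mx polyC A).
  by rewrite /GRing.comm -!mulmxE scalar_mxC.
have := congr1 determinant (subrXX_comm k XA).
rewrite -!rmorphXn /= Ak0 map_mx0 subr0 det_scalar -mulmxE det_mulmx.
rewrite -/(char_poly_mx A) -/(char_poly A) -exprM => Xkn.
have : char_poly A %| ('X - 0%:P) ^+ (k * n).
  by rewrite polyC0 subr0 Xkn dvdp_mulr.
case/dvdp_exp_XsubCP=> m _.
rewrite polyC0 subr0 eqp_monic ?char_poly_monic ?monicXn // => /eqP chA.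
by have := size_char_poly A; rewrite chA size_polyXn => -[->].
Qed.

Lemma mxtrace_nilpotent (F : fieldType) n (A : 'M[F]_n) k :
  A ^+ k = 0 -> \tr A = 0.
Proof.
case: n A => [|n] A /char_poly_nilpotent chA.
  by rewrite /mxtrace big_ord0.
apply/eqP; rewrite -oppr_eq0 -char_poly_trace // chA coefXn.
by rewrite eqn_leq ltnn andbF.
Qed.

Lemma addrr_eq0 (F : fieldType) (x : F) :
  (2%:R : F) != 0 -> (x + x == 0) = (x == 0).
Proof.
by move=> two_neq0; rewrite -mulr2n -mulr_natl mulf_eq0 (negPf two_neq0).
Qed.

Section LinfunE.
Variables (F : fieldType) (aT rT : vectType F) (f : aT -> rT).
Hypothesis f_linear : linear f.

Let lf : aT -> rT := f.
HB.instance Definition _ := GRing.isSemilinear.Build F aT rT _ lf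
  (GRing.semilinear_linear f_linear).

Lemma linfunE : linfun f =1 f.
Proof. exact: (@lfunE _ _ _ lf). Qed.

End LinfunE.

Section EndomorphismTrace.
Variables (F : fieldType) (V : vectType F).
Local Notation e := (vbasis {:V}).
Local Notation mxof := (passmx.mxof e e).
Let e_basis : basis_of {:V} e := vbasisP {:V}.

Definition lftrace (f : 'End(V)) : F := \tr (mxof f).

Lemma lftraceE f : lftrace f = \sum_i coord e i (f e`_i).
Proof. by apply: eq_bigr => i _; rewrite !mxE passmx.vecof_delta. Qed.

Lemma lftraceD f g : lftrace (f + g) = lftrace f + lftrace g.
Proof. by rewrite /lftrace -mxtraceD -[f]scale1r passmx.mxof_linear !scale1r. Qed.

Lemma lftrace_compC f g : lftrace (f \o g)%VF = lftrace (g \o f)%VF.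
Proof. by rewrite /lftrace !(passmx.mxof_comp e e e_basis) mxtrace_mulC. Qed.

Lemma rVof_iter (f : 'End(V)) k v :
  passmx.rVof e (iter k f v) = passmx.rVof e v *m mxof f ^+ k.
Proof.
elim: k => [|k IHk] /=; first by rewrite mulmx1.
by rewrite (passmx.rVof_app e e_basis) IHk exprSr mulmxA.
Qed.

Lemma lftrace_nilpotent f : nilpotent_end f -> lftrace f = 0.
Proof.
case=> k fk0; apply: (@mxtrace_nilpotent _ _ _ k).
apply/row_matrixP => i; rewrite row0 -[mxof f ^+ k]mul1mx row_mul.
rewrite -(passmx.vecofK e_basis (row i 1%:M)) -rVof_iter fk0.
by apply/rowP => j; rewrite !mxE linear0.
Qed.

Lemma nilpotent_end_sqr (f : 'End(V)) :
  nilpotent_end f -> nilpotent_end (f \o f)%VF.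
Proof.
case=> k fk0; exists k => z; rewrite -[RHS](fk0 (iter k f z)) -iterD.
elim: k {fk0} => [|k IHk] //=.
by rewrite comp_lfunE IHk addnS.
Qed.

Lemma lftrace_comp_polar (f g : 'End(V)) : (2%:R : F) != 0 ->
  lftrace (f \o f)%VF = 0 -> lftrace (g \o g)%VF = 0 ->
  lftrace ((f + g) \o (f + g))%VF = 0 -> lftrace (f \o g)%VF = 0.
Proof.
move=> two_neq0 ff0 gg0.
rewrite comp_lfunDl !comp_lfunDr !lftraceD ff0 gg0 (lftrace_compC g f).
by rewrite add0r addr0 => /eqP; rewrite addrr_eq0 // => /eqP.
Qed.

Lemma lftrace_comp_nil_vspace (W : {vspace 'End(V)}) :
  (2%:R : F) != 0 -> {in W, forall w, nilpotent_end w} ->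
  {in W &, forall f g, lftrace (f \o g)%VF = 0}.
Proof.
move=> two_neq0 Wnil f g Wf Wg.
have sqr0 h : h \in W -> lftrace (h \o h)%VF = 0.
  by move=> /Wnil /nilpotent_end_sqr; apply: lftrace_nilpotent.
by apply: lftrace_comp_polar; rewrite // sqr0 ?memvD.
Qed.

End EndomorphismTrace.

Section BilinearForm.
Variables (F : fieldType) (V : vectType F) (b : V -> V -> F).
Hypothesis b_bilinear : bform_bilinear b.

Lemma bformDl x x' y : b (x + x') y = b x y + b x' y.
Proof. by rewrite -{1}[x]scale1r (proj1 b_bilinear) mul1r. Qed.

Lemma bformDr x y y' : b x (y + y') = b x y + b x y'.
Proof. by rewrite -{1}[y]scale1r (proj2 b_bilinear) mul1r. Qed.

Lemma bform0r x : b x 0 = 0.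
Proof. by apply: (addrI (b x 0)); rewrite -bformDr !addr0. Qed.

Lemma bformZr x a y : b x (a *: y) = a * b x y.
Proof. by rewrite -[a *: y]addr0 (proj2 b_bilinear) bform0r addr0. Qed.

Lemma bformr_sum x I r (P : pred I) (y : I -> V) :
  b x (\sum_(i <- r | P i) y i) = \sum_(i <- r | P i) b x (y i).
Proof. exact: (big_morph (b x) (bformDr x) (bform0r x)). Qed.

Lemma bformr_coord (f : 'End(V)) x z :
  \sum_i coord (vbasis {:V}) i z * b x (f (vbasis {:V})`_i) = b x (f z).
Proof.
rewrite [in RHS](coord_vbasis (memvf z)) linear_sum bformr_sum.
by apply: eq_bigr => i _; rewrite linearZ bformZr.
Qed.

Lemma b_alternating_skew (f : 'End(V)) : b_alternating b f ->
  forall x y, b x (f y) = - b y (f x).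
Proof.
move=> f_alt x y; apply/eqP; rewrite -addr_eq0.
have := f_alt (x + y); rewrite linearD !bformDl !bformDr !f_alt add0r addr0.
by move/eqP.
Qed.

Lemma bform_orthogonal_sym : bform_symmetric b \/ bform_alternating b ->
  forall x y, b x y = 0 -> b y x = 0.
Proof.
case=> [b_sym | b_alt] x y bxy0; first by rewrite b_sym.
have := b_alt (x + y); rewrite !bformDl !bformDr !b_alt bxy0.
by rewrite !add0r addr0.
Qed.

Lemma wedge_bE x y z : wedge_b b x y z = b y z *: x - b x z *: y.
Proof.
apply: linfunE => a z1 z2 /=.
by rewrite !(proj2 b_bilinear) !scalerDl scalerBr !scalerA addrACA opprD.
Qed.

Lemma lftrace_wedge_comp x y (f : 'End(V)) :
  lftrace (wedge_b b x y \o f)%VF = b y (f x) - b x (f y).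
Proof.
rewrite lftraceE -!bformr_coord -sumrB; apply: eq_bigr => i _.
by rewrite comp_lfunE wedge_bE raddfB /= !linearZ /= !(mulrC (coord _ _ _)).
Qed.

End BilinearForm.

Theorem mainTheorem12 (F : fieldType) (V : vectType F)
  (hchar : (2%:R : F) != 0)
  (b : V -> V -> F) (hbil : bform_bilinear b)
  (hsym_alt : bform_symmetric b \/ bform_alternating b)
  (hnd : bform_nondegenerate b)
  (W : {vspace 'End(V)})
  (hWalt : forall w, w \in W -> b_alternating b w)
  (hWnil : forall w, w \in W -> nilpotent_end w)
  (x : V) (hx : x != 0) (u : 'End(V)) (hu : u \in W) (y : V)
  (hxy : wedge_b b x y \in W) :
  b (u x) y = 0.
Proof.
apply: (bform_orthogonal_sym hbil hsym_alt).
have := lftrace_comp_nil_vspace hchar hWnil hxy hu.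
rewrite lftrace_wedge_comp // (b_alternating_skew hbil (hWalt u hu) x y).
by rewrite opprK => /eqP; rewrite addrr_eq0 // => /eqP.
Qed.
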